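(* Let $r\ge1$ and let $\tau$ be a permutation of $F^r$ fixing $\mathbf 0$. The groups $\mathrm{PAut}(S_\tau)$ and $\mathrm{Aut}(SQS_\tau)$ are isomorphic.
   Context: $F=\mathrm{GF}(2)$, $\mathbf 0$ is the all-zero vector. Index the coordinates of $F^{2^r}$ by the vectors of $F^r$; $e_a$ is the unit vector with a single $1$ at position $a$. The extended Hamming code is $\mathcal H=\{x\in F^{2^r}:\sum_{a:x_a=1}a=\mathbf 0,\ \mathrm{wt}(x)\text{ even}\}$. For $x,y\in F^{2^r}$, $x|y$ is the concatenation and $C\times D=\{x|y:x\in C,y\in D\}$. Define $S_\tau=\bigcup_{a\in F^r}(\mathcal H+e_a+e_{\mathbf 0})\times(\mathcal H+e_{\tau(a)}+e_{\tau(\mathbf 0)})\subseteq F^{2^{r+1}}$. $\mathrm{PAut}(S_\tau)$ is the group of permutations $\pi$ of the coordinate positions with $\pi(S_\tau)=S_\tau$ (where $\pi(y)_i=y_{\pi^{-1}(i)}$). The coordinate positions of $F^{2^{r+1}}$ are denoted $(\{a\},\emptyset)$ (position $a$ in the first half) and $(\emptyset,\{a\})$ (second half). $SQS_\tau$ is the Steiner quadruple system on these positions consisting of $Q_0=\{(\{a,b,c,d\},\emptyset): a,b,c,d \text{ pairwise distinct}, a+b+c+d=\mathbf 0\}$, $Q_1=\{(\emptyset,\{a,b,c,d\}): a,b,c,d \text{ pairwise distinct}, a+b+c+d=\mathbf 0\}$ and $Q_\tau=\{(\{a,c\},\{b,d\}):\tau(a+c)=b+d\neq\mathbf 0\}$,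 where $(X,Y)$ denotes the set of positions $\{(\{x\},\emptyset):x\in X\}\cup\{(\emptyset,\{y\}):y\in Y\}$. $\mathrm{Aut}(SQS_\tau)$ is the group of permutations of positions preserving the set of quadruples. *)

From mathcomp Require Import all_boot all_order all_fingroup all_algebra.
Set Implicit Arguments. Unset Strict Implicit. Unset Printing Implicit Defensive.
Import GRing.Theory.
Local Open Scope ring_scope.

Notation V r := 'rV['F_2]_r.
(* coordinate positions of F^{2^{r+1}}: inl a = ({a},∅), inr a = (∅,{a}) *)
Notation Pos r := (V r + V r)%type.

(* words of F^{2^r} (coordinates indexed by F^r) and of F^{2^{r+1}} *)
Notation word r := {ffun V r -> 'F_2}.
Notation word2 r := {ffun Pos r -> 'F_2}.

Definition unitw (r : nat) (a : V r) : word r := [ffun b => (b == a)%:R].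

Definition Hcode (r : nat) : {set word r} :=
  [set x : word r | ((\sum_(a : V r | x a == 1) a) == 0)
                    && ~~ odd #|[set a : V r | x a == 1]| ].

Definition Hcoset (r : nat) (a b : V r) : {set word r} :=
  [set x + unitw a + unitw b | x : word r in Hcode r].

Definition concat (r : nat) (x y : word r) : word2 r :=
  [ffun i => match i with inl a => x a | inr b => y b end].

Definition Stau (r : nat) (tau : {perm V r}) : {set word2 r} :=
  \bigcup_(a : V r)
    [set concat x y | x in Hcoset a 0, y in Hcoset (tau a) (tau 0)].

Definition permw (r : nat) (pi : {perm Pos r}) (y : word2 r) : word2 r :=
  [ffun i => y ((pi^-1)%g i)].

Definition PAut (r : nat) (C : {set word2 r}) : {set {perm Pos r}} :=
  [set pi : {perm Pos r} | [set permw pi y | y in C] == C].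

Definition isQ0 (r : nat) (Q : {set Pos r}) : bool :=
  [exists a : V r, exists b : V r, exists c : V r, exists d : V r,
    [&& [&& a != b, a != c, a != d, b != c, b != d & c != d],
        a + b + c + d == 0 &
        Q == [set (inl a : Pos r); inl b; inl c; inl d]]].

Definition isQ1 (r : nat) (Q : {set Pos r}) : bool :=
  [exists a : V r, exists b : V r, exists c : V r, exists d : V r,
    [&& [&& a != b, a != c, a != d, b != c, b != d & c != d],
        a + b + c + d == 0 &
        Q == [set (inr a : Pos r); inr b; inr c; inr d]]].

Definition isQtau (r : nat) (tau : {perm V r}) (Q : {set Pos r}) : bool :=
  [exists a : V r, exists c : V r, exists b : V r, exists d : V r,
    [&& tau (a + c) == b + d, b + d != 0 &
        Q == [set (inl a : Pos r); inl c; inr b; inr d]]].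

Definition SQS (r : nat) (tau : {perm V r}) : {set {set Pos r}} :=
  [set Q : {set Pos r} | [|| isQ0 Q, isQ1 Q | isQtau tau Q]].

Definition AutSys (r : nat) (B : {set {set Pos r}}) : {set {perm Pos r}} :=
  [set pi : {perm Pos r} | [set (pi @: Q) | Q : {set Pos r} in B] == B].

From mathcomp Require Import all_boot all_order all_fingroup all_algebra.
Set Implicit Arguments. Unset Strict Implicit. Unset Printing Implicit Defensive.
Import GRing.Theory.
Local Open Scope ring_scope.

(* Writing syn x for the sum of the positions of the ones of x, the words of S_tau are the
   x|y with x, y of even weight and syn y = tau (syn x); its words of weight 4 are exactly the
   indicator words of the blocks of SQS_tau, so PAut(S_tau) <= Aut(SQS_tau).  Conversely let
   pi permute the blocks.  Adding a block of Q_0 or Q_1 preserves S_tau, and such additions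
   bring every word of S_tau down to 0 or to a block, so it suffices that adding the image
   pi(B) of a Q_0/Q_1 block B preserves S_tau.  When pi(B) = {a, c | b, d} lies in Q_tau this
   means tau (s + a + c) = tau s + tau (a + c) for all s.  That holds because
   {c, a + s | d, b + tau s} is a block: it is the symmetric difference of pi(B) and the block
   pi(Q) = {a, a + s | b, b + tau s}, hence the image of the weight-4 word B + Q of S_tau. *)

Lemma isog_refl_set (gT : finGroupType) (A : {set gT}) : (A \isog A)%g.
Proof.
apply/existsP; exists [ffun x => x]; apply/andP; split.
  by apply/morphicP => x y _ _; rewrite !ffunE.
by apply/eqP; rewrite -[in RHS](imset_id A^#)%g; apply: eq_imset => x; rewrite ffunE.
Qed.

Lemma imset_inj_stable (T : finType) (f : T -> T) (A : {set T}) :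
  injective f -> {in A, forall x, f x \in A} -> f @: A = A.
Proof.
move=> injf fA; apply/eqP; rewrite eqEcard card_imset // leqnn andbT.
by apply/subsetP => _ /imsetP [x Ax ->]; apply: fA.
Qed.

Lemma imset_permKV (T : finType) (s : {perm T}) (A : {set T}) :
  s @: ((s^-1)%g @: A) = A.
Proof. by rewrite -imset_comp (eq_imset _ (permKV s)) imset_id. Qed.

Notation distinct4 a b c d :=
  [&& a != b, a != c, a != d, b != c, b != d & c != d].

Section FourSets.
Variable T : finType.
Implicit Types (A : {set T}) (a b c d : T).

Lemma card4 a b c d : distinct4 a b c d -> #|[set a; b; c; d]| = 4%N.
Proof.
move=> /and5P [ab ac ad bc /andP [bd cd]].
rewrite (setUC _ [set d]) (setUC _ [set c]) (setUC [set a]) !cardsU1 cards1 !inE.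
by rewrite (eq_sym d c) (eq_sym d b) (eq_sym d a) (eq_sym c b) (eq_sym c a)
  (eq_sym b a) ab (negbTE ac) (negbTE ad) (negbTE bc) (negbTE bd) (negbTE cd).
Qed.

Lemma card4P A : #|A| = 4%N ->
  exists a b c d, distinct4 a b c d /\ A = [set a; b; c; d].
Proof.
move=> A4; have [a Aa] : exists a, a \in A by apply/card_gt0P; rewrite A4.
have Aa3 : #|A :\ a| = 3%N by move: A4; rewrite (cardsD1 a) Aa => -[].
have [b Ab] : exists b, b \in A :\ a by apply/card_gt0P; rewrite Aa3.
have /cards2P [c [d [cd Acd]]] : #|A :\ a :\ b| == 2%N.
  by move: Aa3; rewrite (cardsD1 b) Ab add1n => -[->].
have : c \in A :\ a :\ b by rewrite Acd !inE eqxx.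
have : d \in A :\ a :\ b by rewrite Acd !inE eqxx orbT.
move: Ab; rewrite !inE => /andP [ba bA] /and3P [db da _] /and3P [cb ca _].
exists a, b, c, d; split.
  rewrite (eq_sym a b) (eq_sym a c) (eq_sym a d) (eq_sym b c) (eq_sym b d).
  by rewrite ba ca da cb db cd.
apply/setP => x; rewrite !inE; have [->|xa] //= := eqVneq x a.
have [->|xb] //= := eqVneq x b.
by move/setP/(_ x): Acd; rewrite !inE xa xb.
Qed.

Lemma card_ge3P A : (3 <= #|A|)%N ->
  exists a b c, [/\ a \in A, b \in A, c \in A & [&& a != b, a != c & b != c]].
Proof.
move=> A3; have [a Aa] : exists a, a \in A by apply/card_gt0P; apply: leq_trans A3.
move: A3; rewrite (cardsD1 a) Aa ltnS => A2.
have [b Ab] : exists b, b \in A :\ a by apply/card_gt0P; apply: leq_trans A2.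
move: A2; rewrite (cardsD1 b) Ab ltnS => /card_gt0P [c].
move: Ab; rewrite !inE => /andP [ba Ab] /and3P [cb ca Ac].
by exists a, b, c; rewrite Aa Ab Ac (eq_sym a b) (eq_sym a c) (eq_sym b c) ba ca cb.
Qed.

End FourSets.

Lemma F2P (x : 'F_2) : x = 0 \/ x = 1.
Proof. by case: x => -[|[|//]] ?; [left|right]; apply: val_inj. Qed.

Lemma addF2 (x : 'F_2) : x + x = 0.
Proof. by apply: addrr_pchar2; apply: pchar_Fp. Qed.

Lemma F2_nat_eq0 n : (n%:R == 0 :> 'F_2) = ~~ odd n.
Proof. by rewrite -(@Fp_nat_mod 2) // modn2; case: (odd n). Qed.

Section Vectors.
Variable r : nat.
Implicit Types u v : V r.

Lemma addvv v : v + v = 0.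
Proof. by apply/rowP => i; rewrite !mxE addF2. Qed.

Lemma addv_eq0 u v : (u + v == 0) = (u == v).
Proof.
have oppv : - v = v by apply/eqP; rewrite eq_sym -addr_eq0 addvv.
by rewrite addr_eq0 oppv.
Qed.

Lemma addvKA u v w : u + v + (u + w) = v + w.
Proof. by rewrite addrACA addvv add0r. Qed.

Lemma addKv u v : u + (u + v) = v.
Proof. by rewrite addrA addvv add0r. Qed.

Lemma distinct4_sum3 (a b c : V r) : [&& a != b, a != c & b != c] ->
  distinct4 a b c (a + b + c).
Proof.
case/and3P => ab ac bc; rewrite ab ac bc /= -(addv_eq0 a) -(addv_eq0 b) -(addv_eq0 c).
have -> : a + (a + b + c) = b + c by rewrite -!addrA addKv.
have -> : b + (a + b + c) = a + c by rewrite (addrC a) -!addrA addKv.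
have -> : c + (a + b + c) = a + b by rewrite addrC -addrA addvv addr0.
by rewrite !addv_eq0 ab ac bc.
Qed.

End Vectors.

Section Words.
Variable T : finType.
Implicit Types (x : {ffun T -> 'F_2}) (A : {set T}) (a b c d : T).

Definition delta a : {ffun T -> 'F_2} := [ffun i => (i == a)%:R].
Definition ind A : {ffun T -> 'F_2} := [ffun i => (i \in A)%:R].
Definition supp x : {set T} := [set i | x i != 0].

Lemma addww x : x + x = 0.
Proof. by apply/ffunP => i; rewrite !ffunE addF2. Qed.

Lemma addwKA x y z : x + y + (x + z) = y + z.
Proof. by rewrite addrACA addww add0r. Qed.

Lemma addwK x y : x + y + y = x.
Proof. by rewrite -addrA addww addr0. Qed.

Lemma supp_ind A : supp (ind A) = A.
Proof. by apply/setP => i; rewrite !inE ffunE; case: (i \in A). Qed.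

Lemma ind_supp x : ind (supp x) = x.
Proof. by apply/ffunP => i; rewrite !ffunE inE; case: (F2P (x i)) => ->. Qed.

Lemma ind_setU1 A a : a \notin A -> ind (A :|: [set a]) = ind A + delta a.
Proof.
move=> aA; apply/ffunP => i; rewrite !ffunE !inE.
by have [->|_] := eqVneq i a; rewrite ?(negbTE aA) ?add0r ?orbF ?addr0.
Qed.

Lemma ind2 a b : a != b -> ind [set a; b] = delta a + delta b.
Proof.
move=> ab; rewrite ind_setU1; last by rewrite inE eq_sym.
by congr (_ + _); apply/ffunP => i; rewrite !ffunE inE.
Qed.

Lemma ind4 a b c d : distinct4 a b c d ->
  ind [set a; b; c; d] = delta a + delta b + delta c + delta d.
Proof.
move=> /and5P [ab ac ad bc /andP [bd cd]].
rewrite ind_setU1; last by rewrite !inE !negb_or ![d == _]eq_sym ad bd cd.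
by rewrite ind_setU1 ?ind2 // !inE negb_or ![c == _]eq_sym ac bc.
Qed.

Lemma supp_eq0 x : #|supp x| = 0%N -> x = 0.
Proof.
move/eqP; rewrite cards_eq0 => /eqP x0.
by rewrite -(ind_supp x) x0; apply/ffunP => i; rewrite !ffunE inE.
Qed.

Lemma supp2P x : #|supp x| = 2%N -> exists a b, a != b /\ x = delta a + delta b.
Proof.
move/eqP/cards2P => [a [b [ab xab]]].
by exists a, b; rewrite -ind2 // -xab ind_supp.
Qed.

Lemma supp4P x : #|supp x| = 4%N ->
  exists a b c d, distinct4 a b c d /\ x = delta a + delta b + delta c + delta d.
Proof.
move/card4P => [a [b [c [d [abcd xabcd]]]]].
by exists a, b, c, d; rewrite -ind4 // -xabcd ind_supp.
Qed.

Lemma card_supp_add4 x a b c d :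
  a \in supp x -> b \in supp x -> c \in supp x -> [&& a != b, a != c & b != c] ->
  (#|supp (x + (delta a + delta b + delta c + delta d))%R| < #|supp x|)%N.
Proof.
move=> xa xb xc /and3P [ab ac bc].
have x1 i : i \in supp x -> x i = 1 by rewrite inE; case: (F2P (x i)) => ->.
set X := supp x :\ a :\ b :\ c.
have sub : supp (x + (delta a + delta b + delta c + delta d)) \subset X :|: [set d].
  apply/subsetP => i; rewrite !inE !ffunE.
  have [_|_] := eqVneq i d; first by rewrite orbT.
  have [->|ia] := eqVneq i a.
    by rewrite (negbTE ab) (negbTE ac) (x1 _ xa).
  have [->|ib] := eqVneq i b; first by rewrite (negbTE bc) (x1 _ xb).
  have [->|ic] := eqVneq i c; first by rewrite (x1 _ xc).
  by rewrite !addr0 orbF.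
have cardX : #|supp x| = (#|X| + 3)%N.
  rewrite (cardsD1 a) (cardsD1 b (supp x :\ a)) (cardsD1 c (supp x :\ a :\ b)).
  by rewrite !in_setD1 xa xb xc (eq_sym b) (eq_sym c a) (eq_sym c b) ab ac bc !add1n addn3.
rewrite cardX; apply: leq_ltn_trans (subset_leq_card sub) _.
by apply: leq_ltn_trans (leq_card_setU _ _) _; rewrite cards1 ltn_add2l.
Qed.

End Words.

Section Code.
Variable r : nat.
Implicit Types (x y : word r) (w : word2 r) (a b c d : V r) (pi : {perm Pos r}).

Definition syn x : V r := \sum_a x a *: a.
Definition par x : 'F_2 := \sum_a x a.

Lemma synD x y : syn (x + y) = syn x + syn y.
Proof. by rewrite /syn -big_split; apply: eq_bigr => a _; rewrite ffunE scalerDl. Qed.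

Lemma parD x y : par (x + y) = par x + par y.
Proof. by rewrite /par -big_split; apply: eq_bigr => a _; rewrite ffunE. Qed.

Lemma syn0 : syn 0 = 0.
Proof. by rewrite /syn big1 // => a _; rewrite ffunE scale0r. Qed.

Lemma par0 : par 0 = 0.
Proof. by rewrite /par big1 // => a _; rewrite ffunE. Qed.

Lemma syn_delta a : syn (delta a) = a.
Proof.
rewrite /syn (bigD1 a) //= ffunE eqxx scale1r big1 ?addr0 // => b ba.
by rewrite ffunE (negbTE ba) scale0r.
Qed.

Lemma par_delta a : par (delta a) = 1.
Proof.
rewrite /par (bigD1 a) //= ffunE eqxx big1 ?addr0 // => b ba.
by rewrite ffunE (negbTE ba).
Qed.

Lemma par_card x : par x = #|supp x|%:R.
Proof.
rewrite /par -sum1_card natr_sum [RHS]big_mkcond; apply: eq_bigr => a _.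
by rewrite inE; case: (F2P (x a)) => ->.
Qed.

Lemma mem_Hcode x : (x \in Hcode r) = (syn x == 0) && (par x == 0).
Proof.
rewrite inE par_card F2_nat_eq0.
have -> : \sum_(a | x a == 1) a = syn x.
  rewrite /syn big_mkcond; apply: eq_bigr => a _.
  by case: (F2P (x a)) => ->; rewrite ?scale0r ?scale1r.
suff -> : [set a | x a == 1] = supp x by [].
by apply/setP => a; rewrite !inE; case: (F2P (x a)) => ->.
Qed.

Lemma mem_Hcoset x a b : (x \in Hcoset a b) = (syn x == a + b) && (par x == 0).
Proof.
set shift := fun h : word r => h + unitw a + unitw b.
have shiftK : involutive shift by move=> h; rewrite /shift (addrAC (h + _)) !addwK.
rewrite /Hcoset -[x in x \in _]shiftK mem_imset ?mem_Hcode; last exact: inv_inj.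
rewrite !synD !parD [unitw a]/(delta a) [unitw b]/(delta b) !syn_delta !par_delta.
by rewrite -!addrA addv_eq0 [1 + 1]addF2 addr0.
Qed.

Lemma concatD x y x' y' : concat x y + concat x' y' = concat (x + x') (y + y').
Proof. by apply/ffunP => -[a|a]; rewrite !ffunE. Qed.

Lemma concat0 : concat 0 0 = 0 :> word2 r.
Proof. by apply/ffunP => -[a|a]; rewrite !ffunE. Qed.

Lemma concat_inj x y x' y' : concat x y = concat x' y' -> x = x' /\ y = y'.
Proof.
move=> E; split; apply/ffunP => a.
  by have := congr1 (fun w => w (inl a)) E; rewrite !ffunE.
by have := congr1 (fun w => w (inr a)) E; rewrite !ffunE.
Qed.

Lemma concat_onto w : exists x y, w = concat x y.
Proof.
exists [ffun a => w (inl a)], [ffun a => w (inr a)].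
by apply/ffunP => -[a|a]; rewrite !ffunE.
Qed.

Lemma delta_inl a : delta (inl a : Pos r) = concat (delta a) 0.
Proof. by apply/ffunP => -[b|b]; rewrite !ffunE. Qed.

Lemma delta_inr a : delta (inr a : Pos r) = concat 0 (delta a).
Proof. by apply/ffunP => -[b|b]; rewrite !ffunE. Qed.

Lemma card_supp_concat x y : #|supp (concat x y)| = (#|supp x| + #|supp y|)%N.
Proof.
rewrite -!sum1_card big_sumType.
by congr (_ + _)%N; apply: eq_bigl => a; rewrite !inE ffunE.
Qed.

Lemma permwD pi w w' : permw pi (w + w') = permw pi w + permw pi w'.
Proof. by apply/ffunP => i; rewrite !ffunE. Qed.

Lemma permw0 pi : permw pi 0 = 0.
Proof. by apply/ffunP => i; rewrite !ffunE. Qed.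

Lemma permwK pi : cancel (permw pi) (permw pi^-1).
Proof. by move=> w; apply/ffunP => i; rewrite !ffunE invgK permK. Qed.

Lemma permw_ind pi A : permw pi (ind A) = ind (pi @: A).
Proof.
apply/ffunP => i; rewrite !ffunE -{2}(permKV pi i) mem_imset //.
exact: perm_inj.
Qed.

Lemma par_delta2 a b : par (delta a + delta b) = 0.
Proof. by rewrite parD !par_delta addF2. Qed.

Lemma par_delta4 a b c d : par (delta a + delta b + delta c + delta d) = 0.
Proof. by rewrite !parD !par_delta; apply/eqP. Qed.

Lemma ind_Q0 a b c d : distinct4 a b c d ->
  ind [set inl a; inl b; inl c; inl d] = concat (delta a + delta b + delta c + delta d) 0.
Proof. by move=> abcd; rewrite ind4 // !delta_inl !concatD !addr0. Qed.

Lemma ind_Q1 a b c d : distinct4 a b c d ->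
  ind [set inr a; inr b; inr c; inr d] = concat 0 (delta a + delta b + delta c + delta d).
Proof. by move=> abcd; rewrite ind4 // !delta_inr !concatD !addr0. Qed.

Lemma distinct4_Qtau a c b d : a != c -> b != d ->
  distinct4 (inl a : Pos r) (inl c : Pos r) (inr b : Pos r) (inr d : Pos r).
Proof. by move=> ac bd; rewrite /= ac bd. Qed.

Lemma ind_Qtau a c b d : a != c -> b != d ->
  ind [set inl a; inl c; inr b; inr d] = concat (delta a + delta c) (delta b + delta d).
Proof.
move=> ac bd; rewrite ind4 ?distinct4_Qtau //.
by rewrite !delta_inl !delta_inr !concatD !addr0 !add0r.
Qed.

Lemma isQ0_set a b c d : distinct4 a b c d -> a + b + c + d = 0 ->
  isQ0 [set inl a; inl b; inl c; inl d].
Proof.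
move=> abcd s0; apply/existsP; exists a; apply/existsP; exists b.
by apply/existsP; exists c; apply/existsP; exists d; rewrite abcd s0 !eqxx.
Qed.

Lemma isQ1_set a b c d : distinct4 a b c d -> a + b + c + d = 0 ->
  isQ1 [set inr a; inr b; inr c; inr d].
Proof.
move=> abcd s0; apply/existsP; exists a; apply/existsP; exists b.
by apply/existsP; exists c; apply/existsP; exists d; rewrite abcd s0 !eqxx.
Qed.

Lemma isQtau_set (tau : {perm V r}) a c b d : tau (a + c) = b + d -> b + d != 0 ->
  isQtau tau [set inl a; inl c; inr b; inr d].
Proof.
move=> t bd; apply/existsP; exists a; apply/existsP; exists c.
by apply/existsP; exists b; apply/existsP; exists d; rewrite t bd !eqxx.
Qed.

End Code.

Section Stau.
Variables (r : nat) (tau : {perm V r}).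
Hypothesis tau0 : tau 0 = 0.
Implicit Types (x y : word r) (w : word2 r) (a b c d : V r) (Q B : {set Pos r}).

Lemma tau_eq0 v : (tau v == 0) = (v == 0).
Proof. by rewrite -{1}tau0 (inj_eq perm_inj). Qed.

Lemma Qtau_distinct a c b d : tau (a + c) = b + d -> b + d != 0 -> a != c /\ b != d.
Proof.
move=> t bd; split; last by rewrite -addv_eq0.
by apply: contraNneq bd => ac; rewrite -t ac addvv tau0.
Qed.

Lemma mem_Stau x y :
  (concat x y \in Stau tau) = [&& par x == 0, par y == 0 & syn y == tau (syn x)].
Proof.
apply/bigcupP/idP => [[a _ /imset2P [x' y' Hx Hy /concat_inj [-> ->]]]|].
  move: Hx Hy; rewrite !mem_Hcoset tau0 !addr0 => /andP [/eqP-> ->] /andP [/eqP-> ->].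
  by rewrite eqxx.
case/and3P => px py /eqP sy; exists (syn x) => //; apply/imset2P; exists x y => //.
  by rewrite mem_Hcoset addr0 eqxx.
by rewrite mem_Hcoset tau0 addr0 sy eqxx.
Qed.

Lemma Stau0 : 0 \in Stau tau.
Proof. by rewrite -concat0 mem_Stau syn0 par0 tau0 !eqxx. Qed.

Lemma Stau_add x y x' y' : concat x y \in Stau tau -> concat x' y' \in Stau tau ->
  (forall s, tau (s + syn x') = tau s + tau (syn x')) ->
  concat x y + concat x' y' \in Stau tau.
Proof.
rewrite concatD !mem_Stau !parD !synD.
move=> /and3P [/eqP-> /eqP-> /eqP->] /and3P [/eqP-> /eqP-> /eqP->] ->.
by rewrite addr0 !eqxx.
Qed.

Lemma SQS_Stau Q : Q \in SQS tau -> #|Q| = 4%N /\ ind Q \in Stau tau.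
Proof.
rewrite inE => /or3P [].
- case/existsP => a /existsP [b] /existsP [c] /existsP [d] /and3P [abcd /eqP s0 /eqP ->].
  rewrite card4 // ind_Q0 // mem_Stau par_delta4 par0 syn0 !synD !syn_delta s0.
  by rewrite tau0 !eqxx.
- case/existsP => a /existsP [b] /existsP [c] /existsP [d] /and3P [abcd /eqP s0 /eqP ->].
  rewrite card4 // ind_Q1 // mem_Stau par_delta4 par0 syn0 !synD !syn_delta s0.
  by rewrite tau0 !eqxx.
case/existsP => a /existsP [c] /existsP [b] /existsP [d] /and3P [/eqP t bd0 /eqP ->].
have [ac bd] := Qtau_distinct t bd0.
rewrite card4 ?distinct4_Qtau // ind_Qtau // mem_Stau !par_delta2 !synD !syn_delta.
by rewrite t !eqxx.
Qed.

Lemma Stau_SQS w : w \in Stau tau -> #|supp w| = 4%N -> supp w \in SQS tau.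
Proof.
have [x [y ->]] := concat_onto w.
rewrite mem_Stau card_supp_concat !par_card !F2_nat_eq0 => /and3P [ex _ /eqP sy] w4.
have : (#|supp x| <= 4)%N by rewrite -w4 leq_addr.
move: ex w4; case Ex: #|supp x| => [|[|[|[|[|//]]]]] // _ w4 _; rewrite inE.
- move: w4; rewrite add0n => /supp4P [a [b [c [d [abcd yE]]]]].
  have s0 : a + b + c + d = 0.
    by move: sy; rewrite (supp_eq0 Ex) yE syn0 tau0 !synD !syn_delta.
  rewrite (supp_eq0 Ex) yE -ind_Q1 // supp_ind.
  exact/or3P/Or32/(isQ1_set abcd s0).
- have [a [c [ac xE]]] := supp2P Ex.
  have [b [d [bd yE]]] : exists b d, b != d /\ y = delta b + delta d.
    by apply: supp2P; apply/eqP; rewrite -(eqn_add2l 2) w4.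
  have t : tau (a + c) = b + d by move: sy; rewrite xE yE !synD !syn_delta.
  have bd0 : b + d != 0 by rewrite addv_eq0.
  rewrite xE yE -ind_Qtau // supp_ind.
  exact/or3P/Or33/(isQtau_set t bd0).
have [a [b [c [d [abcd xE]]]]] := supp4P Ex.
have y0 : y = 0 by apply: supp_eq0; apply/eqP; rewrite -(eqn_add2l 4) w4.
have s0 : a + b + c + d = 0.
  apply/eqP; rewrite -tau_eq0.
  by move: sy; rewrite xE y0 syn0 !synD !syn_delta => <-.
rewrite xE y0 -ind_Q0 // supp_ind.
exact/or3P/Or31/(isQ0_set abcd s0).
Qed.

Lemma SQS_block Q : (Q \in SQS tau) = (#|Q| == 4%N) && (ind Q \in Stau tau).
Proof.
apply/idP/andP => [/SQS_Stau [-> ->] // | [/eqP Q4 HQ]].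
by rewrite -(supp_ind Q); apply: Stau_SQS; rewrite ?supp_ind.
Qed.

Lemma SQS_Q01 B : isQ0 B || isQ1 B -> B \in SQS tau.
Proof. by rewrite inE; case/orP => ->; rewrite ?orbT. Qed.

Lemma Stau_add_Q01 w B : w \in Stau tau -> isQ0 B || isQ1 B -> w + ind B \in Stau tau.
Proof.
have [x [y ->]] := concat_onto w => Hw HB.
have [_] := SQS_Stau (SQS_Q01 HB).
case/orP: HB => /existsP [a] /existsP [b] /existsP [c] /existsP [d];
  case/and3P=> abcd /eqP s0 /eqP ->.
  rewrite ind_Q0 // => HB; apply: Stau_add Hw HB _ => s.
  by rewrite !synD !syn_delta s0 tau0 !addr0.
rewrite ind_Q1 // => HB; apply: Stau_add Hw HB _ => s.
by rewrite syn0 tau0 !addr0.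
Qed.

Lemma Stau_small x y : concat x y \in Stau tau ->
  (#|supp x| <= 2)%N -> (#|supp y| <= 2)%N ->
  concat x y = 0 \/ (#|supp x| + #|supp y| = 4)%N.
Proof.
rewrite mem_Stau !par_card !F2_nat_eq0 => /and3P [ex ey /eqP sy].
move: ex ey; case Ex: #|supp x| => [|[|[|//]]] //;
  case Ey: #|supp y| => [|[|[|//]]] // _ _ _ _; [left | exfalso | exfalso | by right].
- by rewrite (supp_eq0 Ex) (supp_eq0 Ey) concat0.
- have [b [d [bd yE]]] := supp2P Ey.
  move: sy; rewrite yE (supp_eq0 Ex) synD !syn_delta syn0 tau0 => /eqP.
  by rewrite addv_eq0 (negbTE bd).
have [a [c [ac xE]]] := supp2P Ex.
move: sy; rewrite xE (supp_eq0 Ey) synD !syn_delta syn0 => /esym/eqP.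
by rewrite tau_eq0 addv_eq0 (negbTE ac).
Qed.

Lemma Stau_reduce w : w \in Stau tau -> w != 0 -> #|supp w| != 4%N ->
  exists2 B, isQ0 B || isQ1 B & (#|supp (w + ind B)%R| < #|supp w|)%N.
Proof.
have [x [y ->]] := concat_onto w => Hw w0 w4.
have [hx|hx] := leqP 3 #|supp x|.
  have [a [b [c [xa xb xc abc]]]] := card_ge3P hx.
  exists [set inl a; inl b; inl c; inl (a + b + c)].
    by apply/orP; left; apply: isQ0_set (distinct4_sum3 abc) (addvv _).
  rewrite ind_Q0 ?distinct4_sum3 // concatD addr0 !card_supp_concat ltn_add2r.
  exact: card_supp_add4.
have [hy|hy] := leqP 3 #|supp y|.
  have [a [b [c [ya yb yc abc]]]] := card_ge3P hy.
  exists [set inr a; inr b; inr c; inr (a + b + c)].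
    by apply/orP; right; apply: isQ1_set (distinct4_sum3 abc) (addvv _).
  rewrite ind_Q1 ?distinct4_sum3 // concatD addr0 !card_supp_concat ltn_add2l.
  exact: card_supp_add4.
have [w0'|w4'] := Stau_small Hw hx hy; first by rewrite w0' eqxx in w0.
by rewrite card_supp_concat w4' in w4.
Qed.

End Stau.

Section Automorphisms.
Variables (r : nat) (tau : {perm V r}) (pi : {perm Pos r}).
Hypotheses (tau0 : tau 0 = 0)
  (pi_SQS : [set pi @: Q | Q : {set Pos r} in SQS tau] = SQS tau).
Implicit Types (w : word2 r) (a b c d s : V r) (Q B Z : {set Pos r}).

Lemma SQS_imset Q : (pi @: Q \in SQS tau) = (Q \in SQS tau).
Proof. by rewrite -{1}pi_SQS mem_imset //; apply/imset_inj/perm_inj. Qed.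

Lemma SQS_image_add B Q Z : isQ0 B || isQ1 B -> Q \in SQS tau -> #|Z| = 4%N ->
  ind Z = ind (pi @: B) + ind (pi @: Q) -> Z \in SQS tau.
Proof.
move=> HB HQ Z4 indZ; rewrite -(imset_permKV pi Z) SQS_imset SQS_block //.
rewrite card_imset ?Z4 ?eqxx /=; last exact: perm_inj.
rewrite -permw_ind indZ -!permw_ind -permwD permwK addrC.
by apply: Stau_add_Q01 => //; have [_] := SQS_Stau tau0 HQ.
Qed.

Lemma Qtau_image_additive B a c b d : isQ0 B || isQ1 B ->
  pi @: B = [set inl a; inl c; inr b; inr d] -> tau (a + c) = b + d -> b + d != 0 ->
  forall s, tau (s + (a + c)) = tau s + tau (a + c).
Proof.
move=> HB piB t bd0 s; have [ac bd] := Qtau_distinct tau0 t bd0.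
have [->|s0] := eqVneq s 0; first by rewrite tau0 !add0r.
have [->|su] := eqVneq s (a + c); first by rewrite addvv tau0 addvv.
set g := a + s; set h := b + tau s.
have ag : a != g by rewrite -addv_eq0 addKv.
have bh : b != h by rewrite -addv_eq0 addKv tau_eq0.
have cg : c != g by rewrite -addv_eq0 /g addrA (addrC c) addv_eq0 eq_sym.
have dE : d = b + tau (a + c) by rewrite t addKv.
have dh : d != h.
  by rewrite dE /h -addv_eq0 addvKA addv_eq0 (inj_eq perm_inj) eq_sym.
have B2 : [set inl a; inl g; inr b; inr h] \in SQS tau.
  have tg : tau (a + g) = b + h by rewrite /g /h !addKv.
  have bh0 : b + h != 0 by rewrite /h addKv tau_eq0.
  by rewrite inE; apply/or3P/Or33/(isQtau_set tg bh0).
have Z : [set inl c; inl g; inr d; inr h] \in SQS tau.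
  apply: (SQS_image_add (Q := (pi^-1)%g @: [set inl a; inl g; inr b; inr h])) HB _ _ _.
  - by rewrite -SQS_imset imset_permKV.
  - by rewrite card4 ?distinct4_Qtau.
  by rewrite imset_permKV piB !ind_Qtau // concatD !addwKA.
have [_] := SQS_Stau tau0 Z; rewrite ind_Qtau // mem_Stau // !synD !syn_delta.
case/and3P => _ _ /eqP; rewrite dE /h addvKA /g addrA (addrC c) => E.
by rewrite addrC (addrC (tau s)) E.
Qed.

Lemma Stau_add_image_Q01 w B : w \in Stau tau -> isQ0 B || isQ1 B ->
  w + ind (pi @: B) \in Stau tau.
Proof.
move=> Hw HB; have := SQS_Q01 tau HB; rewrite -SQS_imset inE => /or3P [H|H|].
- by apply: Stau_add_Q01; rewrite ?H.
- by apply: Stau_add_Q01; rewrite ?H ?orbT.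
case/existsP => a /existsP [c] /existsP [b] /existsP [d] /and3P [/eqP t bd0 /eqP piB].
have [ac bd] := Qtau_distinct tau0 t bd0.
have [x [y wE]] := concat_onto w; rewrite wE in Hw *.
rewrite piB ind_Qtau //; apply: (Stau_add tau0 Hw).
  by rewrite mem_Stau // !par_delta2 !synD !syn_delta t !eqxx.
by rewrite synD !syn_delta; apply: Qtau_image_additive HB piB t bd0.
Qed.

Lemma Stau_permw w : w \in Stau tau -> permw pi w \in Stau tau.
Proof.
move Hn: #|supp w| => n; elim/ltn_ind: n w Hn => n IH w Hn Hw.
have [->|w0] := eqVneq w 0; first by rewrite permw0 Stau0.
have [w4|w4] := eqVneq #|supp w| 4%N.
  rewrite -(ind_supp w) permw_ind.
  by have [_] := SQS_Stau tau0 (etrans (SQS_imset _) (Stau_SQS tau0 Hw w4)).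
have [B HB Bdec] := Stau_reduce tau0 Hw w0 w4.
rewrite -(addwK w (ind B)) permwD permw_ind.
apply: (Stau_add_image_Q01 _ HB); apply: (IH _ _ _ erefl (Stau_add_Q01 tau0 Hw HB)).
by rewrite -Hn.
Qed.

End Automorphisms.

Lemma PAut_Stau r (tau : {perm V r}) : tau 0 = 0 -> PAut (Stau tau) = AutSys (SQS tau).
Proof.
move=> tau0; apply/setP => pi; rewrite !inE; apply/eqP/eqP => pi_stable.
  apply: imset_inj_stable; first exact/imset_inj/perm_inj.
  move=> Q; rewrite !SQS_block // card_imset; last exact: perm_inj.
  case/andP => -> HQ /=; rewrite -permw_ind -pi_stable; exact: imset_f.
apply: imset_inj_stable; first exact: can_inj (permwK pi).
by move=> w; apply: Stau_permw.
Qed.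

Theorem corollary2 (r : nat) (tau : {perm V r}) :
  (1 <= r)%N -> tau 0 = 0 ->
  (PAut (Stau tau) \isog AutSys (SQS tau))%g.
Proof.
by move=> _ tau0; rewrite (PAut_Stau tau0); apply: isog_refl_set.
Qed.
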